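(* Let $h\ge 1$ be an integer and let $O$ be a finite set of next hops with $\delta=|O|$ and probability distribution $(p_o)_{o\in O}$. Let $T$ be the complete binary trie of height $h$ whose $2^h$ leaves are labeled independently, each leaf receiving next hop $o$ with probability $p_o$. Let $D$ be the DAG obtained from $T$ by trie-folding, and for $1\le j\le h$ let $V^j_D$ be the set of nodes of $D$ at level $j$. Then for every $1\le j\le h$, \[E(|V^j_D|) \leq \min\left\{\frac{H_O}{h-j} 2^{h} + 3,\ 2^{h-j},\ \delta^{2^j} \right\},\] where $H_O=\sum_{o\in O} p_o\log_2\frac{1}{p_o}$, and the first term is interpreted as $+\infty$ when $j=h$.
   Context: Levels: the level of a node of $T$ is $h$ minus its distance (number of edges) from the root, so the root has level $h$, the leaves have level $0$, and level $j$ contains $2^{h-j}$ nodes, each being the root of a subtrie of height $j$ with $2^j$ labeled leaves. Trie-folding: two nodes of $T$ are merged whenever the subtries rooted at them are identical, i.e. have the same structure and the same sequence of next-hop labels at their leaves; the result is a DAG $D$ in which each distinct labeled subtrie is represented once. Thus the nodes of $D$ at level $j$ correspond to the distinct leaf-label strings of length $2^j$ occurring among the $2^{h-j}$ subtries rooted at level $j$. Terms with $p_o=0$ contribute $0$ to $H_O$. *)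

From HB Require Import structures.
From mathcomp Require Import all_boot all_order all_algebra.
From mathcomp Require Import reals exp.
Set Implicit Arguments. Unset Strict Implicit. Unset Printing Implicit Defensive.
Import Order.TTheory GRing.Theory Num.Theory.
Local Open Scope ring_scope.

(* Leaf labelings of the complete binary trie of height h: functions
   from the 2^h leaves (left to right) to the set O of next hops. *)

Definition leaf_seq (O : finType) (h : nat) (f : {ffun 'I_(2 ^ h) -> O}) : seq O :=
  [seq f i | i <- enum 'I_(2 ^ h)].

(* Leaf-label string of the k-th subtrie rooted at level j (k < 2^(h-j)):
   the 2^j consecutive leaves k*2^j, ..., (k+1)*2^j - 1. *)
Definition subtrie_string (O : finType) (h j : nat) (f : {ffun 'I_(2 ^ h) -> O})
    (k : nat) : seq O :=
  take (2 ^ j) (drop (k * 2 ^ j) (leaf_seq f)).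

(* |V^j_D|: the number of nodes at level j of the trie-folded DAG D, i.e. the
   number of distinct leaf-label strings among the 2^(h-j) subtries at level j. *)
Definition nodes_at_level (O : finType) (h j : nat) (f : {ffun 'I_(2 ^ h) -> O}) : nat :=
  size (undup [seq subtrie_string j f k | k <- iota 0 (2 ^ (h - j))]).

Definition labeling_prob (R : realType) (O : finType) (p : O -> R) (h : nat)
    (f : {ffun 'I_(2 ^ h) -> O}) : R :=
  \prod_(i : 'I_(2 ^ h)) p (f i).

Definition expected_nodes (R : realType) (O : finType) (p : O -> R) (h j : nat) : R :=
  \sum_(f : {ffun 'I_(2 ^ h) -> O}) labeling_prob p f * (nodes_at_level j f)%:R.

Definition log2 (R : realType) (x : R) : R := ln x / ln 2.

Definition entropy (R : realType) (O : finType) (p : O -> R) : R :=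
  \sum_(o : O) (if p o == 0 then 0 else p o * log2 (p o)^-1).

From HB Require Import structures.
From mathcomp Require Import all_boot all_order all_algebra.
From mathcomp Require Import interval_inference reals convex exp.
From mathcomp Require Import ring lra zify.
Import Order.TTheory GRing.Theory Num.Theory.
Set Implicit Arguments. Unset Strict Implicit. Unset Printing Implicit Defensive.
Local Open Scope ring_scope.

(** The level-[j] nodes of the folded DAG are the distinct label strings [t] of
    length [2^j] carried by the [N = 2^(h-j)] subtries rooted at level [j].  A
    string [t] occurs with probability at most [min(1, N P(t))], where [P(t)] is
    its product probability, so [E|V^j_D| <= sum_t min(1, N P(t))].  By
    concavity of [ln], [min(1, N q) <= q + N / log2 N * q log2 (1/q)] for every
    [q] in [[0, 1]], and [sum_t P(t) log2 (1/P(t)) = 2^j H_O] by additivity of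
    entropy, whence [E|V^j_D| <= 1 + 2^h H_O / (h - j)].  The two other bounds
    count the subtries and the possible strings. *)

Section Surprisal.
Variable R : realType.

Definition surprisal (x : R) : R := if x == 0 then 0 else log2 x^-1.

Lemma ln_ge_chord (a x : R) : 1 < a -> 1 <= x <= a ->
  (x - 1) / (a - 1) * ln a <= ln x.
Proof.
move=> a_gt1 /andP[x_ge1 x_le_a].
have t_ge0 : 0 <= (a - x) / (a - 1) by apply: divr_ge0; lra.
have t_le1 : (a - x) / (a - 1) <= 1 by rewrite ler_pdivrMr; lra.
have := concave_ln (Itv01 t_ge0 t_le1) ltr01 (lt_trans ltr01 a_gt1).
rewrite !convRE /= ln1 mulr0 add0r /unstable.onem.
have -> : (a - x) / (a - 1) * 1 + (1 - (a - x) / (a - 1)) * a = x by field; lra.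
suff -> : 1 - (a - x) / (a - 1) = (x - 1) / (a - 1) by [].
by field; lra.
Qed.

Lemma ln_prod (I : finType) (x : I -> R) : (forall i, 0 < x i) ->
  ln (\prod_i x i) = \sum_i ln (x i).
Proof.
move=> x_gt0; pose K (a b : R) := 0 < a /\ ln a = b.
suff [] : K (\prod_i x i) (\sum_i ln (x i)) by [].
apply: big_rec2 => [|i a b _ [a_gt0 <-]]; first by split; rewrite ?ln1.
by split; rewrite ?mulr_gt0 ?lnM ?posrE.
Qed.

Lemma surprisal_prod (I : finType) (x : I -> R) : (forall i, 0 < x i) ->
  surprisal (\prod_i x i) = \sum_i surprisal (x i).
Proof.
move=> x_gt0; rewrite /surprisal gt_eqF ?prodr_gt0 // /log2 -prodfV ln_prod.
  by rewrite mulr_suml; apply: eq_bigr => i _; rewrite gt_eqF.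
by move=> i; rewrite invr_gt0.
Qed.

Lemma min1_le_surprisal (L : nat) (q : R) : (0 < L)%N -> 0 <= q <= 1 ->
  Num.min 1 ((2 ^ L)%:R * q) <= q + (2 ^ L)%:R / L%:R * (q * surprisal q).
Proof.
move=> L_gt0 /andP[q_ge0 q_le1].
rewrite /surprisal; have [->|q_neq0] := eqVneq q 0.
  by rewrite !mulr0 addr0 ge_min lexx orbT.
have q_gt0 : 0 < q by rewrite lt0r q_neq0.
set N : R := (2 ^ L)%:R.
have Lr_gt0 : 0 < (L%:R : R) by rewrite ltr0n.
have ln2_gt0 : 0 < ln (2 : R) by rewrite ln_gt0 // ltr1n.
have lnN : ln N = L%:R * ln 2 by rewrite /N natrX lnXn // mulr_natl.
have N_gt1 : 1 < N by rewrite /N ltr1n -{1}(expn0 2) ltn_exp2l.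
have scaleE : N / L%:R * (q * log2 q^-1) = q * (N * (ln q^-1 / ln N)).
  by rewrite lnN /log2; field; lra.
rewrite scaleE; set l := ln q^-1 / ln N.
have lnN_gt0 : 0 < ln N by rewrite ln_gt0.
have qV_ge1 : 1 <= q^-1 by rewrite invf_ge1.
have l_ge0 : 0 <= l by rewrite divr_ge0 ?ln_ge0 // ltW.
have [Nq_ge1|Nq_lt1] := lerP 1 (N * q).
- (* [1 <= q^-1 <= N]: compare [ln] with its chord from [1] to [N] *)
  have qV_le_N : q^-1 <= N by rewrite -(ler_pM2r q_gt0) mulVf.
  have : (q^-1 - 1) / (N - 1) <= l.
    by rewrite /l ler_pdivlMr // ln_ge_chord // qV_ge1.
  rewrite ler_pdivrMr ?subr_gt0 // => chord.
  have qqV : q * q^-1 = 1 by rewrite mulfV.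
  have : q * (q^-1 - 1) <= q * (l * (N - 1)) by rewrite ler_wpM2l.
  have : 0 <= q * l by rewrite mulr_ge0.
  nra.
- have N_le_qV : N <= q^-1 by rewrite -[q^-1]mul1r ler_pdivlMr // ltW.
  have l_ge1 : 1 <= l.
    rewrite /l ler_pdivlMr // mul1r.
    by rewrite ler_ln ?posrE ?invr_gt0 // (lt_trans ltr01).
  have : 0 <= N * q by rewrite mulr_ge0 // ltW // (lt_trans ltr01).
  nra.
Qed.
End Surprisal.

Lemma sum_mul_min1_le (R : realDomainType) (T : finType) (w X : T -> R) :
  (forall x, 0 <= w x) -> \sum_x w x = 1 ->
  \sum_x w x * Num.min 1 (X x) <= Num.min 1 (\sum_x w x * X x).
Proof.
move=> w_ge0 w_sum1; rewrite le_min; apply/andP; split.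
  rewrite -[leRHS]w_sum1; apply: ler_sum => x _.
  by rewrite ler_piMr // ge_min lexx.
by apply: ler_sum => x _; rewrite ler_wpM2l // ge_min lexx orbT.
Qed.

Lemma codom_ffun_inj (I : finType) (T : eqType) :
  injective (fun f : {ffun I -> T} => codom f).
Proof.
move=> f g E; apply/ffunP => x.
by have := congr1 (fun s => nth (f x) s (enum_rank x)) E; rewrite /= !nth_codom enum_rankK.
Qed.

Section Subtries.
Variables (O : finType) (h j : nat).
Hypothesis j_le_h : (j <= h)%N.
Local Open Scope nat_scope.

Lemma block_ltn (k : 'I_(2 ^ (h - j))) (m : 'I_(2 ^ j)) : k * 2 ^ j + m < 2 ^ h.
Proof.
have : k.+1 * 2 ^ j <= 2 ^ (h - j) * 2 ^ j by rewrite leq_mul2r ltn_ord orbT.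
by rewrite -expnD subnK // mulSn; move: (ltn_ord m); lia.
Qed.

Definition block_ord k m : 'I_(2 ^ h) := Ordinal (block_ltn k m).

Lemma block_ord_inj k : injective (block_ord k).
Proof. by move=> m1 m2 /(congr1 val)/addnI/val_inj. Qed.

Definition subtrie (f : {ffun 'I_(2 ^ h) -> O}) k : {ffun 'I_(2 ^ j) -> O} :=
  [ffun m => f (block_ord k m)].

Lemma enum_block (k : 'I_(2 ^ (h - j))) :
  take (2 ^ j) (drop (k * 2 ^ j) (enum 'I_(2 ^ h))) = map (block_ord k) (enum 'I_(2 ^ j)).
Proof.
have blk := block_ltn k; apply: (inj_map val_inj).
rewrite map_take map_drop val_enum_ord drop_iota take_iota -map_comp.
rewrite (eq_map (g := addn (k * 2 ^ j) \o val)) // map_comp val_enum_ord -iotaDl addn0.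
congr iota; apply/minn_idPl; case: (2 ^ j) blk => [|n] blk //.
by move: (blk ord_max) => /=; lia.
Qed.

Lemma subtrie_stringE f (k : 'I_(2 ^ (h - j))) : subtrie_string j f k = codom (subtrie f k).
Proof.
rewrite /subtrie_string /leaf_seq -map_drop -map_take enum_block -map_comp.
by apply: eq_map => m; rewrite /= ffunE.
Qed.

Lemma nodes_at_levelE f : nodes_at_level j f = #|codom (subtrie f)|.
Proof.
rewrite /nodes_at_level -val_enum_ord -map_comp.
rewrite (eq_map (g := (fun t => codom t) \o subtrie f)); last first.
  by move=> k; exact: subtrie_stringE.
rewrite (map_comp (fun t : {ffun _ -> O} => codom t)) undup_map_inj ?size_map; last first.
  exact: codom_ffun_inj.
by rewrite -(card_uniqP (undup_uniq _)); apply: eq_card => t; rewrite mem_undup.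
Qed.
End Subtries.

Section IndependentLabels.
Variables (R : realType) (O : finType) (p : O -> R).
Hypotheses (p_ge0 : forall o, 0 <= p o) (p_sum1 : \sum_o p o = 1).

Lemma sum_prod_ffun (I : finType) : \sum_(f : {ffun I -> O}) \prod_i p (f i) = 1.
Proof.
rewrite -(bigA_distr_bigA (fun _ o => p o)) /=.
by rewrite big1 // => i _; rewrite p_sum1.
Qed.

Lemma sum_prod_ffun_coord (I : finType) (i0 : I) (F : O -> R) :
  \sum_(f : {ffun I -> O}) (\prod_i p (f i)) * F (f i0) = \sum_o p o * F o.
Proof.
pose w i o := p o * (if i == i0 then F o else 1).
have wE (f : {ffun I -> O}) : (\prod_i p (f i)) * F (f i0) = \prod_i w i (f i).
  rewrite big_split /= [X in _ = _ * X](bigD1 i0) //= eqxx.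
  by rewrite [X in _ * (_ * X)]big1 ?mulr1 // => i /negPf ->.
rewrite (eq_bigr _ (fun f _ => wE f)) -bigA_distr_bigA (bigD1 i0) //=.
rewrite [X in _ * X]big1 ?mulr1.
  by apply: eq_bigr => o _; rewrite /w eqxx.
move=> i /negPf i_neq0; rewrite -[RHS]p_sum1.
by apply: eq_bigr => o _; rewrite /w i_neq0 mulr1.
Qed.

Lemma sum_prod_ffun_comp (I J : finType) (g : J -> I) (t : {ffun J -> O}) :
  injective g ->
  \sum_(f : {ffun I -> O}) (\prod_i p (f i)) * ([ffun j => f (g j)] == t)%:R = \prod_j p (t j).
Proof.
move=> g_inj.
have indicatorE f : ([ffun j => f (g j)] == t)%:R = \prod_j ((f (g j) == t j)%:R : R).
  have [<-|ne] := eqP; first by rewrite big1 // => j _; rewrite ffunE eqxx.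
  have [j /negPf ne_j] : exists j, f (g j) != t j.
    apply/existsP; rewrite -negb_forall; apply/negP => /forallP eq_t.
    by apply: ne; apply/ffunP => j; rewrite ffunE; apply/eqP.
  by rewrite (bigD1 j) //= ne_j mul0r.
(* [w i] tests coordinate [i] against all [t j] with [g j = i]: at most one, by injectivity *)
pose w i o := p o * \prod_(j | g j == i) ((o == t j)%:R : R).
have wE (f : {ffun I -> O}) :
    (\prod_i p (f i)) * ([ffun j => f (g j)] == t)%:R = \prod_i w i (f i).
  rewrite indicatorE (partition_big g xpredT) // -big_split; apply: eq_bigr => i _.
  by congr (_ * _); apply: eq_bigr => j /eqP ->.
rewrite (eq_bigr _ (fun f _ => wE f)) -bigA_distr_bigA (partition_big g xpredT) //=.
apply: eq_bigr => i _; rewrite /w.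
case: (pickP (fun j => g j == i)) => [j0 /eqP gj0|no_j]; last first.
  rewrite [RHS]big_pred0 // -[RHS]p_sum1; apply: eq_bigr => o _.
  by rewrite big_pred0 // mulr1.
have pred1_j0 : (fun j => g j == i) =1 pred1 j0 by move=> j; rewrite /= -gj0 inj_eq.
rewrite (big_pred1 j0) // (bigD1 (t j0)) //= (big_pred1 j0) // eqxx mulr1 big1 ?addr0 //.
by move=> o /negPf o_neq; rewrite (big_pred1 j0) // o_neq mulr0.
Qed.

Lemma sum_prod_surprisal (I : finType) :
  \sum_(t : {ffun I -> O}) (\prod_i p (t i)) * surprisal (\prod_i p (t i)) =
  #|I|%:R * entropy p.
Proof.
have split_t (t : {ffun I -> O}) : (\prod_i p (t i)) * surprisal (\prod_i p (t i)) =
    \sum_i (\prod_i p (t i)) * surprisal (p (t i)).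
  rewrite -mulr_sumr; have [->|] := eqVneq (\prod_i p (t i)) 0; first by rewrite !mul0r.
  move=> Pt_neq0; rewrite surprisal_prod // => i; rewrite lt0r p_ge0 andbT.
  by apply: contraNneq Pt_neq0 => pti0; apply/prodf_eq0; exists i; rewrite ?pti0.
rewrite (eq_bigr _ (fun t _ => split_t t)) exchange_big /=.
rewrite (eq_bigr _ (fun i _ => sum_prod_ffun_coord i (fun o => surprisal (p o)))).
rewrite sumr_const mulr_natl; congr (_ *+ _).
by apply: eq_bigr => o _; rewrite /surprisal; case: eqP => [->|]; rewrite ?mul0r.
Qed.

Lemma labeling_prob_ge0 h (f : {ffun 'I_(2 ^ h) -> O}) : 0 <= labeling_prob p f.
Proof. exact: prodr_ge0. Qed.

Lemma expected_nodes_le_nat h j c :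
  (forall f : {ffun 'I_(2 ^ h) -> O}, (nodes_at_level j f <= c)%N) ->
  expected_nodes p h j <= c%:R.
Proof.
move=> nodes_le.
apply: (@le_trans _ _ (\sum_(f : {ffun 'I_(2 ^ h) -> O}) labeling_prob p f * c%:R)).
  by apply: ler_sum => f _; rewrite ler_wpM2l ?labeling_prob_ge0 ?ler_nat.
by rewrite -mulr_suml sum_prod_ffun mul1r.
Qed.

Lemma expected_subtrie_count h j (j_le_h : (j <= h)%N) (t : {ffun 'I_(2 ^ j) -> O}) :
  \sum_(f : {ffun 'I_(2 ^ h) -> O})
    labeling_prob p f * \sum_(k < 2 ^ (h - j)) ((subtrie j_le_h f k == t)%:R : R) =
  (2 ^ (h - j))%:R * \prod_m p (t m).
Proof.
under [LHS]eq_bigr do rewrite mulr_sumr.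
rewrite exchange_big /= (eq_bigr (fun _ => \prod_m p (t m))).
  by rewrite sumr_const card_ord mulr_natl.
by move=> k _; apply: sum_prod_ffun_comp; exact: block_ord_inj.
Qed.

Lemma nodes_le_sum_min1 h j (j_le_h : (j <= h)%N) (f : {ffun 'I_(2 ^ h) -> O}) :
  (nodes_at_level j f)%:R <=
  \sum_t Num.min 1 (\sum_(k < 2 ^ (h - j)) ((subtrie j_le_h f k == t)%:R : R)).
Proof.
rewrite (nodes_at_levelE j_le_h) -sum1_card natr_sum big_mkcond /=.
apply: ler_sum => t _; case: codomP => [[k ->]|_]; last first.
  by rewrite le_min ler01 sumr_ge0 // => k _; rewrite ler0n.
rewrite le_min lexx (bigD1 k) //= eqxx lerDl.
by apply: sumr_ge0 => i _; rewrite ler0n.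
Qed.

Lemma expected_nodes_le_entropy h j : (j < h)%N ->
  expected_nodes p h j <= entropy p / (h - j)%:R * 2 ^+ h + 1.
Proof.
move=> j_lt_h; have j_le_h := ltnW j_lt_h.
set N := (2 ^ (h - j))%N; pose P (t : {ffun 'I_(2 ^ j) -> O}) := \prod_m p (t m).
have P_ge0 t : 0 <= P t by exact: prodr_ge0.
have P_le1 t : P t <= 1.
  rewrite -(sum_prod_ffun 'I_(2 ^ j)) (bigD1 t) //= lerDl.
  by apply: sumr_ge0 => u _; exact: P_ge0.
have E_le : expected_nodes p h j <= \sum_t Num.min 1 (N%:R * P t).
  apply: (@le_trans _ _ (\sum_(f : {ffun 'I_(2 ^ h) -> O}) labeling_prob p f *
      \sum_t Num.min 1 (\sum_(k < N) ((subtrie j_le_h f k == t)%:R : R)))).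
    apply: ler_sum => f _; rewrite ler_wpM2l ?labeling_prob_ge0 //.
    exact: nodes_le_sum_min1.
  under eq_bigr do rewrite mulr_sumr.
  rewrite exchange_big /=; apply: ler_sum => t _.
  rewrite -expected_subtrie_count; apply: sum_mul_min1_le => [f|].
    exact: labeling_prob_ge0.
  exact: sum_prod_ffun.
apply: (le_trans E_le).
apply: (@le_trans _ _ (\sum_t (P t + N%:R / (h - j)%:R * (P t * surprisal (P t))))).
  by apply: ler_sum => t _; apply: min1_le_surprisal; rewrite ?subn_gt0 ?P_ge0 ?P_le1.
rewrite big_split /= sum_prod_ffun -mulr_sumr sum_prod_surprisal card_ord.
have -> : (2 ^+ h : R) = N%:R * (2 ^ j)%:R by rewrite -natrM -expnD subnK // natrX.
suff -> : N%:R / (h - j)%:R * ((2 ^ j)%:R * entropy p) =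
    entropy p / (h - j)%:R * (N%:R * (2 ^ j)%:R) by rewrite addrC.
by ring.
Qed.
End IndependentLabels.

Theorem lemma2 (R : realType) (O : finType) (p : O -> R)
  (p_ge0 : forall o, 0 <= p o) (p_sum1 : \sum_(o : O) p o = 1)
  (h j : nat) (h_ge1 : (1 <= h)%N) (j_ge1 : (1 <= j)%N) (j_le_h : (j <= h)%N) :
  [/\ ((j < h)%N -> expected_nodes p h j <= entropy p / (h - j)%:R * 2 ^+ h + 3),
      expected_nodes p h j <= (2 ^ (h - j))%:R
    & expected_nodes p h j <= (#|O| ^ (2 ^ j))%:R].
Proof.
split.
- move=> j_lt_h; apply: (le_trans (expected_nodes_le_entropy p_ge0 p_sum1 j_lt_h)).
  by rewrite lerD2l ler1n.
- apply: expected_nodes_le_nat => // f; rewrite (nodes_at_levelE j_le_h).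
  by rewrite (leq_trans (card_size _)) // size_codom card_ord.
- apply: expected_nodes_le_nat => // f; rewrite (nodes_at_levelE j_le_h).
  by rewrite (leq_trans (max_card _)) // card_ffun !card_ord.
Qed.
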